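(* Let $G$ be a graph with $n$ vertices. Then for every integer $m\geq 1$, $$P_{DP}(G,m)\leq \frac{m^{n}(m-1)^{|E(G)|}}{m^{|E(G)|}}.$$
   Context: All graphs are finite and simple. A cover of a graph $G$ is a pair $\mathcal{H}=(L,H)$ where $H$ is a graph and $L:V(G)\to\mathcal{P}(V(H))$ satisfies: (1) the sets $L(u)$, $u\in V(G)$, partition $V(H)$; (2) for every $u$, $H[L(u)]$ is complete; (3) if $E_H(L(u),L(v))\neq\emptyset$ then $u=v$ or $uv\in E(G)$; (4) if $uv\in E(G)$ then $E_H(L(u),L(v))$ is a matching (possibly empty). Here $E_H(S,U)$ is the set of edges of $H$ between $S$ and $U$. The cover is $m$-fold if $|L(u)|=m$ for all $u$. An $\mathcal{H}$-coloring is an independent set of $H$ of size $|V(G)|$. $P_{DP}(G,\mathcal{H})$ is the number of $\mathcal{H}$-colorings, and $P_{DP}(G,m)$ is the minimum of $P_{DP}(G,\mathcal{H})$ over all $m$-fold covers $\mathcal{H}$ of $G$. *)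

From HB Require Import structures.
From mathcomp Require Import all_boot all_order all_algebra.
Set Implicit Arguments. Unset Strict Implicit. Unset Printing Implicit Defensive.

Definition simple_graph (V : finType) (e : rel V) : Prop :=
  symmetric e /\ irreflexive e.

Definition num_edges (V : finType) (e : rel V) : nat :=
  #|[set A : {set V} | [exists x, exists y, e x y && (A == [set x; y])]]|.

(* Every m-fold cover of G has
   exactly |V(G)|*m vertices, so (up to isomorphism, which preserves the number
   of H-colorings) we may take V(H) = V * 'I_m.  H itself is an arbitrary
   graph on this vertex set, given by its set of (ordered) adjacent pairs hE,
   and L : V -> {set V(H)} is an arbitrary assignment. *)
Definition HV (V : finType) (m : nat) : finType := (V * 'I_m)%type.

Definition is_cover (V : finType) (e : rel V) (m : nat)
  (L : {ffun V -> {set HV V m}}) (hE : {set HV V m * HV V m}) : bool :=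
  [&&
      [forall x, forall y, ((x, y) \in hE) == ((y, x) \in hE)],
      [forall x, (x, x) \notin hE],
      [forall x, #|[set u | x \in L u]| == 1],
      [forall u, forall x, forall y,
          [&& x \in L u, y \in L u & x != y] ==> ((x, y) \in hE)],
      [forall u, forall v, forall x, forall y,
          [&& x \in L u, y \in L v & (x, y) \in hE] ==> (u == v) || e u v]
    &
      [forall u, forall v, e u v ==>
         [forall x, (x \in L u) ==> (#|[set y in L v | (x, y) \in hE]| <= 1)] &&
         [forall y, (y \in L v) ==> (#|[set x in L u | (x, y) \in hE]| <= 1)]]].

Definition is_mfold_cover (V : finType) (e : rel V) (m : nat)
  (L : {ffun V -> {set HV V m}}) (hE : {set HV V m * HV V m}) : bool :=
  is_cover e L hE && [forall u, #|L u| == m].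

(* P_DP(G, H): the number of H-colorings, i.e. independent sets of H of size |V(G)|. *)
Definition PDP_cover (V : finType) (m : nat) (hE : {set HV V m * HV V m}) : nat :=
  #|[set I : {set HV V m} |
      [forall x in I, forall y in I, (x, y) \notin hE] && (#|I| == #|V|)]|.

(* The neutral
   element #|{set HV V m}| is an upper bound for every P_DP(G,H), and m-fold
   covers always exist, so this is the genuine minimum. *)
Definition PDP (V : finType) (e : rel V) (m : nat) : nat :=
  \big[minn/#|{set HV V m}|]_(c : {ffun V -> {set HV V m}} * {set HV V m * HV V m}
                               | is_mfold_cover e c.1 c.2) PDP_cover c.2.

From HB Require Import structures.
From mathcomp Require Import all_boot all_order all_algebra.
Import Order.TTheory GRing.Theory Num.Theory.
Set Implicit Arguments. Unset Strict Implicit.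

(* Fix m = k+1 and identify V(H) with V * Z_m.  Orient every edge uv of G
   from the vertex of smaller enumeration rank to the larger one.  A "shift"
   s assigns an element s(u,v) of Z_m to every ordered pair; the associated
   cover joins (u,i) to (v,i + s(u,v)) along each oriented edge uv, and makes
   each fibre {u} * Z_m a clique.  This is an m-fold cover, and its colorings
   are exactly the graphs of maps c : V -> Z_m with c v <> c u + s(u,v) on
   every oriented edge.  Hence P_DP(G,m) is at most the number of such c,
   for every shift s.  Averaging over all m^(|V|^2) shifts and exchanging the
   two sums, each fixed c avoids the forbidden shift on each of the |E(G)|
   oriented edges with m-1 choices out of m, which gives
       P_DP(G,m) * m^|E| <= m^|V| * (m-1)^|E|. *)

Lemma card_set_sum (T : finType) (P : pred T) : #|[set x | P x]| = \sum_x (P x : nat).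
Proof. by rewrite -sum1dep_card big_mkcond; apply: eq_bigr => x _; case: (P x). Qed.

Lemma double_count (S C : finType) (R : S -> C -> bool) :
  \sum_s #|[set c | R s c]| = \sum_c #|[set s | R s c]|.
Proof.
under eq_bigr do rewrite card_set_sum.
rewrite exchange_big; apply: eq_bigr => c _.
by rewrite (card_set_sum (R^~ c)).
Qed.

Lemma card_avoid_translate (T : finZmodType) (a b : T) :
  #|[pred t : T | b != (a + t)%R]| = #|T|.-1.
Proof.
have hit : #|[pred t : T | b == (a + t)%R]| = 1.
  rewrite -(card1 (b - a)%R); apply: eq_card => t.
  by rewrite !inE [RHS]eq_sym subr_eq addrC.
by rewrite -(cardC [pred t : T | b == (a + t)%R]) hit.
Qed.

Lemma bigminn_le (I : finType) (P : pred I) (F : I -> nat) x j :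
  P j -> \big[minn/x]_(i | P i) F i <= F j.
Proof. by move=> Pj; have := bigmin_le_cond x F Pj; rewrite -minEnat. Qed.

Section Orientation.
Variables (V : finType) (e : rel V).
Hypotheses (e_sym : symmetric e) (e_irr : irreflexive e).

Definition rk (u : V) : nat := enum_rank u.

Lemma rk_inj : injective rk.
Proof. by move=> u v /val_inj/enum_rank_inj. Qed.

Definition oedge (p : V * V) : bool := (rk p.1 < rk p.2) && e p.1 p.2.

Lemma set2_oriented_inj (a b c d : V) :
  rk a < rk b -> rk c < rk d -> [set a; b] = [set c; d] -> (a, b) = (c, d).
Proof.
move=> ab cd /setP E.
have := E a; have := E b; have := E c; rewrite !inE !eqxx /= ?orbT.
move=> H1 /esym H2 /esym H3.
case/orP: H1 => /eqP ?; case/orP: H2 => /eqP ?; case/orP: H3 => /eqP ?; subst => //.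
all: try by rewrite ltnn in ab.
all: try by rewrite ltnn in cd.
all: by have := ltn_trans ab cd; rewrite ltnn.
Qed.

(* Each edge of G has exactly one orientation, so oriented edges count |E(G)|. *)
Lemma card_oedge : #|[pred p | oedge p]| = num_edges e.
Proof.
pose ends (p : V * V) := [set p.1; p.2].
have -> : num_edges e = #|ends @: [set p | oedge p]|.
  rewrite /num_edges; apply: eq_card => A; rewrite inE.
  apply/existsP/imsetP => [[x /existsP[y /andP[exy /eqP ->]]]|[[x y]]].
    case: (ltngtP (rk x) (rk y)) => h.
    - by exists (x, y) => //; rewrite inE /oedge /= h exy.
    - by exists (y, x); [rewrite inE /oedge /= h e_sym | rewrite /ends /= setUC].
    - by move/rk_inj: h exy => ->; rewrite e_irr.
  rewrite inE /oedge /= => /andP[_ exy] ->; exists x; apply/existsP; exists y.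
  by rewrite exy eqxx.
rewrite card_in_imset; first by apply: eq_card => p; rewrite inE.
move=> [a b] [c d]; rewrite !inE /oedge /= => /andP[ab _] /andP[cd _].
exact: set2_oriented_inj.
Qed.

End Orientation.

Section ShiftCover.
Variables (V : finType) (e : rel V) (k : nat).
Hypotheses (e_sym : symmetric e) (e_irr : irreflexive e).

Local Notation shift := {ffun V * V -> 'I_k.+1}.
Local Notation vertex := (V * 'I_k.+1)%type.

Definition shift_adj (s : shift) (x y : vertex) : bool :=
  ((x.1 == y.1) && (x != y)) ||
  (e x.1 y.1 && (if rk x.1 < rk y.1 then y.2 == (x.2 + s (x.1, y.1))%R
                 else x.2 == (y.2 + s (y.1, x.1))%R)).

Lemma shift_adj_sym s x y : shift_adj s x y = shift_adj s y x.
Proof.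
rewrite /shift_adj eq_sym [y == x]eq_sym e_sym; congr (_ || _).
case E: (e y.1 x.1) => //=.
case: ltngtP => h //.
by move/rk_inj: h E => ->; rewrite e_irr.
Qed.

Lemma shift_adj_irr s x : shift_adj s x x = false.
Proof. by rewrite /shift_adj !eqxx e_irr. Qed.

Lemma shift_adj_edge s x y : shift_adj s x y -> (x.1 == y.1) || e x.1 y.1.
Proof. by case/orP=> [/andP[->]|/andP[->]] //; rewrite orbT. Qed.

Lemma shift_adj_match s (x : vertex) v : e x.1 v ->
  #|[set y : vertex | (y.1 == v) && shift_adj s x y]| <= 1.
Proof.
move=> exv.
have xv : x.1 != v by apply: contraTneq exv => ->; rewrite e_irr.
pose j := if rk x.1 < rk v then (x.2 + s (x.1, v))%R else (x.2 - s (v, x.1))%R.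
rewrite -(cards1 (v, j)) subset_leq_card //; apply/subsetP => -[y1 y2].
rewrite !inE /shift_adj /= => /andP[/eqP ->]; rewrite (negbTE xv) /= => /andP[_].
rewrite /j xpair_eqE eqxx /=; case: ifP => _ /eqP -> //.
by rewrite addrK.
Qed.

Definition fibres : {ffun V -> {set HV V k.+1}} := [ffun u => [set x : vertex | x.1 == u]].

Definition shift_edges (s : shift) : {set HV V k.+1 * HV V k.+1} :=
  [set p : vertex * vertex | shift_adj s p.1 p.2].

Lemma card_fibre u : #|fibres u| = k.+1.
Proof.
have pair_inj : injective (pair u : 'I_k.+1 -> vertex) by move=> i j [].
rewrite ffunE -[RHS](card_ord k.+1) -(card_imset _ pair_inj).
apply: eq_card => -[a i]; rewrite !inE /=; apply/eqP/imsetP => [->|[j _ [-> _]]] //.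
by exists i.
Qed.

Lemma shift_cover_mfold s : is_mfold_cover e fibres (shift_edges s).
Proof.
have inF u (x : vertex) : (x \in fibres u) = (x.1 == u) by rewrite ffunE inE.
apply/andP; split; last by apply/forallP=> u; rewrite card_fibre.
rewrite /is_cover; do !(apply/andP; split).
- by apply/forallP=> x; apply/forallP=> y; rewrite !inE /= shift_adj_sym.
- by apply/forallP=> x; rewrite !inE /= shift_adj_irr.
- apply/forallP=> x; apply/eqP.
  have -> : [set u | x \in fibres u] = [set x.1].
    by apply/setP=> u; rewrite !inE inF eq_sym.
  exact: cards1.
- apply/forallP=> u; apply/forallP=> x; apply/forallP=> y; apply/implyP.
  rewrite !inF !inE => /and3P[/eqP xu /eqP yu xy].
  by rewrite /shift_adj xu yu eqxx xy.
- apply/forallP=> u; apply/forallP=> v; apply/forallP=> x; apply/forallP=> y.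
  by apply/implyP; rewrite !inF !inE => /and3P[/eqP <- /eqP <- /shift_adj_edge].
- apply/forallP=> u; apply/forallP=> v; apply/implyP=> euv; apply/andP; split.
  + apply/forallP=> x; apply/implyP; rewrite inF => /eqP xu.
    apply: leq_trans (@shift_adj_match s x v _); last by rewrite xu.
    by apply: subset_leq_card; apply/subsetP=> y; rewrite !inE inF.
  + apply/forallP=> y; apply/implyP; rewrite inF => /eqP yv.
    apply: leq_trans (@shift_adj_match s y u _); last by rewrite yv e_sym.
    by apply: subset_leq_card; apply/subsetP=> x; rewrite !inE inF shift_adj_sym.
Qed.

(* c : V -> Z_m is proper for s when c v <> c u + s(u,v) on every oriented
   edge uv; these are the colorings of the shift cover. *)
Definition proper_shift (s : shift) (c : {ffun V -> 'I_k.+1}) : bool :=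
  [forall p : V * V, oedge e p ==> (c p.2 != c p.1 + s p)%R].

(* Every coloring I of the shift cover is the graph of a proper map c: I
   meets each fibre once since fibres are cliques and |I| = |V|. *)
Lemma shift_colorings_le s :
  PDP_cover (shift_edges s) <= #|[set c | proper_shift s c]|.
Proof.
pose graph (c : {ffun V -> 'I_k.+1}) : {set HV V k.+1} := [set (u, c u) | u : V].
apply: leq_trans (leq_imset_card graph _); apply: subset_leq_card.
apply/subsetP=> I; rewrite inE => /andP[/forallP indep /eqP cardI].
have nadj x y : x \in I -> y \in I -> shift_adj s x y = false.
  move=> xI yI; have := indep x; rewrite xI /= => /forallP/(_ y); rewrite yI /=.
  by rewrite /shift_edges inE /= => /negbTE.
pose c := [ffun u => odflt ord0 [pick i | (u, i) \in I]].
have cE u i : (u, i) \in I -> c u = i.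
  move=> uiI; rewrite /c ffunE; case: pickP => [j ujI|/(_ i)]; last by rewrite uiI.
  apply/eqP; apply: contraFT (nadj _ _ uiI ujI) => ij.
  by rewrite /shift_adj /= eqxx /= xpair_eqE eqxx /= eq_sym ij.
have Ic : I = graph c.
  apply/eqP; rewrite eqEcard; apply/andP; split.
    apply/subsetP=> -[u i] uiI; apply/imsetP; exists u => //.
    by rewrite (cE _ _ uiI).
  by rewrite cardI (leq_trans (leq_imset_card _ _)) // cardE enumT.
apply/imsetP; exists c => //; rewrite inE; apply/forallP=> -[u v]; apply/implyP.
rewrite /oedge /= => /andP[ltuv euv].
have cI w : (w, c w) \in I by rewrite Ic; apply/imsetP; exists w.
have := nadj (u, c u) (v, c v) (cI u) (cI v).
by rewrite /shift_adj /= euv ltuv orbC /= => /norP[].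
Qed.

(* For a fixed c, s is free off the oriented edges and avoids one value on
   each oriented edge. *)
Lemma card_proper_shifts c :
  #|[set s | proper_shift s c]| =
    k ^ #|[pred p | oedge e p]| * k.+1 ^ #|[pred p | ~~ oedge e p]|.
Proof.
pose allowed (p : V * V) := [pred t : 'I_k.+1 | oedge e p ==> (c p.2 != c p.1 + t)%R].
have -> : #|[set s | proper_shift s c]| = #|family allowed|.
  by apply: eq_card => s; rewrite inE; apply/forallP/familyP => H p; apply: H.
rewrite card_family foldrE big_map big_enum /= (bigID (oedge e)) /=.
rewrite (eq_bigr (fun _ => k)) => [|p ep]; last first.
  have := card_avoid_translate (c p.1) (c p.2); rewrite card_ord /= => avoid.
  by rewrite -[RHS]avoid; apply: eq_card => t; rewrite !inE ep.
rewrite [X in _ * X](eq_bigr (fun _ => k.+1)) => [|p /negbTE ep]; last first.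
  by rewrite -[RHS](card_ord k.+1); apply: eq_card => t; rewrite !inE ep.
by rewrite !prod_nat_const.
Qed.

Lemma PDP_le_shift_cover s : PDP e k.+1 <= PDP_cover (shift_edges s).
Proof.
exact: (bigminn_le (fun c => PDP_cover c.2) _ (j := (fibres, shift_edges s))
          (shift_cover_mfold s)).
Qed.

(* The averaging inequality: sum the previous bound over all shifts and
   count the pairs (s, c) by c instead. *)
Lemma PDP_average :
  PDP e k.+1 * k.+1 ^ #|[pred p | oedge e p]| <= k.+1 ^ #|V| * k ^ #|[pred p | oedge e p]|.
Proof.
set E := #|[pred p | oedge e p]|; set F := #|[pred p | ~~ oedge e p]|.
have sum_le : \sum_(s : shift) PDP e k.+1 <= \sum_(s : shift) #|[set c | proper_shift s c]|.
  by apply: leq_sum => s _; rewrite (leq_trans (PDP_le_shift_cover s)) ?shift_colorings_le.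
rewrite double_count (eq_bigr _ (fun c _ => card_proper_shifts c)) !sum_nat_const in sum_le.
rewrite !card_ffun !card_ord -(cardC (oedge e)) -/E -/F expnD in sum_le.
rewrite -(leq_pmul2r (expn_gt0 k.+1 F)); move: sum_le.
by rewrite [_ * _ * PDP e _]mulnC -!mulnA [k ^ E * _]mulnC.
Qed.
End ShiftCover.

Unset Implicit Arguments.
Theorem mainTheorem8 (V : finType) (e : rel V) (m : nat) :
  simple_graph e -> (1 <= m)%N ->
  (((PDP e m)%:R : rat) <=
    (m ^ #|V| * (m - 1) ^ num_edges e)%:R / (m ^ num_edges e)%:R)%R.
Proof.
move=> [e_sym e_irr]; case: m => [//|k] _; rewrite subn1 /=.
rewrite ler_pdivlMr ?ltr0n ?expn_gt0 // -natrM ler_nat.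
by rewrite -(card_oedge e_sym e_irr) PDP_average.
Qed.
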